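(* Consider any sequences evolved by Algorithm 1 and let $d_0:=\|x^*-x^0\|$. Then: (a) for all $k\ge1$, $h(y^k)-h(x^* )\le\frac{d_0^2}{2A_k}$, $\|x^*-y^k\|^2\le\frac{d_0^2}{\mu A_k}$, and $\|x^*-x^k\|^2\le\frac{d_0^2}{1+\mu A_k}$; (b) for all $k\ge1$, $v^{k+1}\in\partial_{\varepsilon_{k+1}}f(y^{k+1})+\partial g(y^{k+1})$, $\|v^{k+1}\|^2\le\frac{6\big(1+\sigma\sqrt{1+\mu\lambda_{k+1}}\big)^2}{\lambda_{k+1}^2}\cdot\frac{d_0^2}{\mu A_k}$, and $\varepsilon_{k+1}\le\frac{3\sigma^2}{\lambda_{k+1}}\cdot\frac{d_0^2}{\mu A_k}$.
   Context: Setting: $\mathcal H$ is a finite-dimensional real inner product space with inner product $\langle\cdot,\cdot\rangle$ and norm $\|\cdot\|$. $f,g:\mathcal H\to(-\infty,\infty]$ are proper, closed, convex functions, $h:=f+g$ has nonempty domain, and $g$ is $\mu$-strongly convex for some $\mu>0$, i.e. $g(tx+(1-t)y)\le tg(x)+(1-t)g(y)-\frac{\mu}{2}t(1-t)\|x-y\|^2$ for all $x,y\in\mathcal H$, $t\in[0,1]$. $x^*$ denotes the unique minimizer of $h$. For $\varepsilon\ge 0$, $\partial_\varepsilon f(y):=\{u\in\mathcal H: f(w)\ge f(y)+\langle u,w-y\rangle-\varepsilon\ \forall w\in\mathcal H\}$, and $\partial g:=\partial_0 g$. Algorithm 1: Choose $x^0,y^0\in\mathcal H$ and $\sigma\in[0,1]$,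 and set $A_0=0$. For $k=0,1,2,\dots$: choose $\lambda_{k+1}>0$, set $a_{k+1}=\frac{(1+2\mu A_k)\lambda_{k+1}+\sqrt{(1+2\mu A_k)^2\lambda_{k+1}^2+4(1+\mu A_k)A_k\lambda_{k+1}}}{2}$ and $\tilde x^k=\frac{a_{k+1}-\mu A_k\lambda_{k+1}}{A_k+a_{k+1}}x^k+\frac{A_k+\mu A_k\lambda_{k+1}}{A_k+a_{k+1}}y^k$; compute $(y^{k+1},v^{k+1},\varepsilon_{k+1})\in\mathcal H\times\mathcal H\times[0,\infty)$ such that $v^{k+1}\in\partial_{\varepsilon_{k+1}}f(y^{k+1})+\partial g(y^{k+1})$ and $\frac{\|\lambda_{k+1}v^{k+1}+y^{k+1}-\tilde x^k\|^2}{1+\lambda_{k+1}\mu}+2\lambda_{k+1}\varepsilon_{k+1}\le\sigma^2\|y^{k+1}-\tilde x^k\|^2$; then set $A_{k+1}=A_k+a_{k+1}$ and $x^{k+1}=\frac{1+\mu A_k}{1+\mu A_{k+1}}x^k+\frac{\mu a_{k+1}}{1+\mu A_{k+1}}y^{k+1}-\frac{a_{k+1}}{1+\mu A_{k+1}}v^{k+1}$. ''Sequences evolved by Algorithm 1'' means any sequences satisfying all these relations for every $k\ge 0$. *)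

From HB Require Import structures.
From mathcomp Require Import all_boot all_order all_algebra.
From mathcomp Require Import all_classical all_reals all_analysis.
Set Implicit Arguments. Unset Strict Implicit. Unset Printing Implicit Defensive.
Import Order.TTheory GRing.Theory Num.Theory.
Import numFieldNormedType.Exports.
Local Open Scope ring_scope.
Local Open Scope classical_set_scope.

(* The finite-dimensional real inner product space H is modelled as
   'rV[R]_n with the standard (Euclidean) inner product. *)
Definition ip {R : realType} {n : nat} (u v : 'rV[R]_n) : R :=
  \sum_(i < n) u ord0 i * v ord0 i.

Definition enorm {R : realType} {n : nat} (u : 'rV[R]_n) : R := Num.sqrt (ip u u).

Definition proper_fun {R : realType} {n : nat} (f : 'rV[R]_n -> \bar R) : Prop :=
  (forall x, f x <> -oo%E) /\ (exists x, (f x < +oo)%E).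

Definition closed_fun {R : realType} {n : nat} (f : 'rV[R]_n -> \bar R) : Prop :=
  forall c : R, closed [set x | (f x <= c%:E)%E].

Definition strongly_convex {R : realType} {n : nat} (mu : R)
  (f : 'rV[R]_n -> \bar R) : Prop :=
  forall (x y : 'rV[R]_n) (t : R), 0 <= t -> t <= 1 ->
    (f (t *: x + (1 - t) *: y)%R <=
      t%:E * f x + (1 - t)%:E * f y
      - (mu / 2 * t * (1 - t) * enorm (x - y) ^+ 2)%:E)%E.

Definition convex_fun {R : realType} {n : nat} (f : 'rV[R]_n -> \bar R) : Prop :=
  strongly_convex 0 f.

Definition eps_subdiff {R : realType} {n : nat} (f : 'rV[R]_n -> \bar R)
  (eps : R) (y u : 'rV[R]_n) : Prop :=
  forall w, (f w >= f y + (ip u (w - y)%R)%:E - eps%:E)%E.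

Definition in_sum_subdiff {R : realType} {n : nat} (f g : 'rV[R]_n -> \bar R)
  (eps : R) (y v : 'rV[R]_n) : Prop :=
  exists u w, eps_subdiff f eps y u /\ eps_subdiff g 0 y w /\ v = u + w.

Definition algorithm1 {R : realType} {n : nat} (f g : 'rV[R]_n -> \bar R) (mu sigma : R)
  (x y xt v : nat -> 'rV[R]_n) (eps lam a A : nat -> R) : Prop :=
  0 <= sigma <= 1 /\ A 0%N = 0 /\
  forall k : nat,
    [/\ 0 < lam k.+1 /\
        a k.+1 = ((1 + 2 * mu * A k) * lam k.+1
                  + Num.sqrt ((1 + 2 * mu * A k) ^+ 2 * lam k.+1 ^+ 2
                              + 4 * (1 + mu * A k) * A k * lam k.+1)) / 2,
        xt k = ((a k.+1 - mu * A k * lam k.+1) / (A k + a k.+1)) *: x k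
               + ((A k + mu * A k * lam k.+1) / (A k + a k.+1)) *: y k,
        [/\ in_sum_subdiff f g (eps k.+1) (y k.+1) (v k.+1),
            0 <= eps k.+1 &
            enorm (lam k.+1 *: v k.+1 + y k.+1 - xt k) ^+ 2 / (1 + lam k.+1 * mu)
              + 2 * lam k.+1 * eps k.+1
              <= sigma ^+ 2 * enorm (y k.+1 - xt k) ^+ 2],
        A k.+1 = A k + a k.+1 &
        x k.+1 = ((1 + mu * A k) / (1 + mu * A k.+1)) *: x k
                 + ((mu * a k.+1) / (1 + mu * A k.+1)) *: y k.+1
                 - (a k.+1 / (1 + mu * A k.+1)) *: v k.+1].

From HB Require Import structures.
From mathcomp Require Import all_boot all_order all_algebra.
From mathcomp Require Import all_classical all_reals all_analysis.
From mathcomp Require Import ring lra.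
Import Order.TTheory GRing.Theory Num.Theory.
Local Open Scope ring_scope.

(* With x^* the minimizer of h, the potential
       A_k (h(y_k) - h(x^* )) + (1 + mu A_k) / 2 * |x^* - x_k|^2
   never exceeds its initial value |x^* - x_0|^2 / 2.  Its one-step decrease
   comes from an exact algebraic identity (the step a_{k+1} is the root of the
   quadratic that makes it hold), from the relative-error criterion, and from
   the strong subgradient inequality of f + g at y_{k+1}, tested at x^* and
   at y_k.  Part (a) follows by adding the quadratic growth of h around x^*.
   For part (b), x_k, y_k and y_{k+1}, hence the extrapolated point xt_k,
   all lie within squared distance |x^* - x_0|^2 / (mu A_k) of x^*, and the
   criterion bounds eps_{k+1} and |lam_{k+1} v_{k+1}| through
   |y_{k+1} - xt_k|. *)

(* Inner-product identities are checked coordinatewise: unfold [ip], merge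
   all sums into a single one and compare the summands. *)
Ltac coordinatewise :=
  rewrite /ip; do ?[rewrite -!sumrN | rewrite -!big_split | rewrite !mulr_sumr
                   | rewrite !mulr_suml];
  apply: eq_bigr => i _; rewrite ?mxE /=.

Section InnerProduct.
Context {R : realType} {n : nat}.
Implicit Types (p q r : 'rV[R]_n) (s t : R).

Lemma ipDl p q r : ip (p + q) r = ip p r + ip q r.
Proof. by coordinatewise; ring. Qed.

Lemma ipDr p q r s t : ip r (s *: p + t *: q) = s * ip r p + t * ip r q.
Proof. by coordinatewise; ring. Qed.

Lemma ip_ge0 p : 0 <= ip p p.
Proof. by apply: sumr_ge0 => i _; rewrite -expr2 sqr_ge0. Qed.

Lemma enorm_sq p : enorm p ^+ 2 = ip p p.
Proof. by rewrite /enorm sqr_sqrtr // ip_ge0. Qed.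

Lemma ipZZ p s : ip (s *: p) (s *: p) = s ^+ 2 * ip p p.
Proof. by coordinatewise; ring. Qed.

Lemma ip_subZZ p q s t : ip (s *: p - t *: q) (s *: p - t *: q) =
  s ^+ 2 * ip p p - 2 * s * t * ip p q + t ^+ 2 * ip q q.
Proof. by coordinatewise; ring. Qed.

Lemma ip_subC p q : ip (p - q) (p - q) = ip (q - p) (q - p).
Proof. by coordinatewise; ring. Qed.

Lemma ip_convex p q {s t} : 0 <= s -> 0 <= t -> s + t = 1 ->
  ip (s *: p + t *: q) (s *: p + t *: q) <= s * ip p p + t * ip q q.
Proof.
move=> s0 t0 st1.
have -> : s * ip p p + t * ip q q =
          ip (s *: p + t *: q) (s *: p + t *: q) + s * t * ip (p - q) (p - q).
  have -> : t = 1 - s by lra.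
  by coordinatewise; ring.
by rewrite lerDl mulr_ge0 ?ip_ge0 // mulr_ge0.
Qed.

Lemma ip_add_le p q : ip (p + q) (p + q) <= 2 * ip p p + 2 * ip q q.
Proof.
have -> : 2 * ip p p + 2 * ip q q = ip (p + q) (p + q) + ip (p - q) (p - q).
  by coordinatewise; ring.
by rewrite lerDl ip_ge0.
Qed.

Lemma cauchy_schwarz p q : ip p q ^+ 2 <= ip p p * ip q q.
Proof.
have [q0|q0] := eqVneq (ip q q) 0.
  have qi0 i : q ord0 i = 0.
    move/eqP: q0; rewrite /ip psumr_eq0 => [|j _]; last by rewrite -expr2 sqr_ge0.
    by move/allP/(_ i (mem_index_enum _)); rewrite /= -expr2 sqrf_eq0 => /eqP.
  have -> : ip p q = 0 by rewrite /ip big1 // => i _; rewrite qi0 mulr0.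
  by rewrite q0 expr0n mulr0.
have qpos : 0 < ip q q by rewrite lt_def q0 ip_ge0.
have := ip_ge0 (ip q q *: p - ip p q *: q); rewrite ip_subZZ => expansion_ge0.
have : 0 <= ip q q * (ip p p * ip q q - ip p q ^+ 2) by nra.
by rewrite pmulr_rge0 //; lra.
Qed.

(* If [p] is within [s] times the length of [r], then [p - r] is within
   [1 + s] times it: the triangle inequality, via Cauchy-Schwarz. *)
Lemma ip_sub_le {p r s} : 0 <= s -> ip p p <= s ^+ 2 * ip r r ->
  ip (p - r) (p - r) <= (1 + s) ^+ 2 * ip r r.
Proof.
move=> s0 hp.
have expand : ip (p - r) (p - r) = ip p p - 2 * ip p r + ip r r.
  by coordinatewise; ring.
have hcs : ip p r ^+ 2 <= (s * ip r r) ^+ 2.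
  apply: le_trans (cauchy_schwarz p r) _.
  by rewrite exprMn expr2 mulrA ler_wpM2r ?ip_ge0.
have hsr : 0 <= s * ip r r by rewrite mulr_ge0 ?ip_ge0.
have : - ip p r <= s * ip r r by nra.
rewrite expand; nra.
Qed.

End InnerProduct.

Section ConvexAnalysis.
Context {R : realType} {n : nat}.
Implicit Types (f g : 'rV[R]_n -> \bar R) (e : \bar R).

(* A real bounded below by [- t * M] for every [t] in (0, 1] is nonnegative;
   this turns the defining inequalities of (strong) convexity, which hold
   along segments, into first-order inequalities. *)
Lemma ge0_of_vanishing_lower_bound {D M : R} : 0 <= M ->
  (forall t, 0 < t -> t <= 1 -> - (t * M) <= D) -> 0 <= D.
Proof.
move=> M0 lowD; rewrite leNgt; apply/negP => D0.
pose t := - D / (M - D).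
have t0 : 0 < t by rewrite divr_gt0 //; lra.
have t1 : t <= 1 by rewrite ler_pdivrMr; lra.
have tMD : t * (M - D) = - D by rewrite mulfVK // gt_eqF //; lra.
have := lowD t t0 t1; nra.
Qed.

Lemma fin_of_le_fin {e} {r : R} : e <> -oo%E -> (e <= r%:E)%E -> e = (fine e)%:E.
Proof. by case: e. Qed.

Lemma fin_of_sum_lt_pinfty {e1 e2} : e1 <> -oo%E -> e2 <> -oo%E ->
  (e1 + e2 < +oo)%E -> e1 = (fine e1)%:E /\ e2 = (fine e2)%:E.
Proof. by case: e1 => [r||]; case: e2 => [r'||]. Qed.

Lemma fin_of_subdiff {f eps y u} : (forall z, f z <> -oo%E) ->
  (exists z, (f z < +oo)%E) -> eps_subdiff f eps y u -> f y = (fine (f y))%:E.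
Proof.
move=> fnoo [z fz] fyu; have := fyu z; have := fnoo y.
by case: (f y) => // _; move: fz; case: (f z).
Qed.

Lemma strong_subgradient_ineq {g} {mu : R} {y w u} {gy gu : R} :
  0 < mu -> strongly_convex mu g -> eps_subdiff g 0 y w ->
  g y = gy%:E -> g u = gu%:E ->
  gy + ip w (u - y) + mu / 2 * ip (u - y) (u - y) <= gu.
Proof.
move=> mu0 gsc gyw gyE guE.
set M := mu / 2 * ip (u - y) (u - y).
have M0 : 0 <= M by rewrite mulr_ge0 ?ip_ge0 //; lra.
suff : 0 <= gu - gy - ip w (u - y) - M by lra.
apply: (ge0_of_vanishing_lower_bound M0) => t t0 t1.
have conv := gsc u y t (ltW t0) t1; rewrite guE gyE enorm_sq in conv.
have := le_trans (gyw (t *: u + (1 - t) *: y)) conv.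
rewrite gyE -?EFinM -?EFinD -?EFinB -?EFinD -?EFinB lee_fin.
have -> : ip w (t *: u + (1 - t) *: y - y) = t * ip w (u - y).
  by coordinatewise; ring.
move=> segment.
have : 0 <= t * (gu - gy - ip w (u - y) - M + t * M) by rewrite /M; lra.
by rewrite pmulr_rge0 //; lra.
Qed.

Lemma sum_subdiff_ineq {f g} {mu eps : R} {y v u} {fy gy fu gu : R} :
  0 < mu -> strongly_convex mu g -> in_sum_subdiff f g eps y v ->
  f y = fy%:E -> g y = gy%:E -> f u = fu%:E -> g u = gu%:E ->
  fy + gy + ip v (u - y) + mu / 2 * ip (u - y) (u - y) - eps <= fu + gu.
Proof.
move=> mu0 gsc [uf [w [fyu [gyw ->]]]] fyE gyE fuE guE.
have gineq := strong_subgradient_ineq mu0 gsc gyw gyE guE.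
have := fyu u; rewrite fyE fuE -?EFinD -?EFinB lee_fin => fineq.
rewrite ipDl; lra.
Qed.

Lemma quadratic_growth_at_min {f g} {mu : R} {ys xs} {fy gy fs gs : R} :
  0 < mu -> convex_fun f -> strongly_convex mu g ->
  (forall z, f z <> -oo%E) -> (forall z, g z <> -oo%E) ->
  (forall z, (f xs + g xs <= f z + g z)%E) ->
  f ys = fy%:E -> g ys = gy%:E -> f xs = fs%:E -> g xs = gs%:E ->
  fs + gs + mu / 2 * ip (ys - xs) (ys - xs) <= fy + gy.
Proof.
move=> mu0 fcv gsc fnoo gnoo xsmin fyE gyE fsE gsE.
set M := mu / 2 * ip (ys - xs) (ys - xs).
have M0 : 0 <= M by rewrite mulr_ge0 ?ip_ge0 //; lra.
suff : 0 <= fy + gy - fs - gs - M by lra.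
apply: (ge0_of_vanishing_lower_bound M0) => t t0 t1.
set p := t *: ys + (1 - t) *: xs.
have fconv := fcv ys xs t (ltW t0) t1; rewrite fyE fsE -/p in fconv.
have gconv := gsc ys xs t (ltW t0) t1; rewrite gyE gsE enorm_sq -/p in gconv.
move: fconv gconv; rewrite -?EFinM -?EFinD -?EFinB -?EFinD -?EFinB => fconv gconv.
have fpE := fin_of_le_fin (fnoo p) fconv.
have gpE := fin_of_le_fin (gnoo p) gconv.
rewrite fpE lee_fin in fconv; rewrite gpE lee_fin in gconv.
have := xsmin p; rewrite fsE gsE fpE gpE -!EFinD lee_fin => pmin.
have : 0 <= t * (fy + gy - fs - gs - M + t * M) by rewrite /M; lra.
by rewrite pmulr_rge0 //; lra.
Qed.

End ConvexAnalysis.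

Lemma ler_wpdiv_denom {R : realFieldType} (c p q : R) :
  0 <= c -> 0 < p -> p <= q -> c / q <= c / p.
Proof. by move=> c0 p0 pq; rewrite ler_wpM2l // lef_pV2 ?posrE //; lra. Qed.

Section OneIteration.
Context {R : realType} {n : nat}.

(* [a] is the positive root of [a^2 = lam * (a * (1 + 2 mu A) + (1 + mu A) A)],
   the quadratic that Algorithm 1 solves for its step; moreover
   [mu A lam <= a], so [xt] is a convex combination of [x] and [y]. *)
Lemma step_coefficient_facts {mu A lam a : R} : 0 < mu -> 0 <= A -> 0 < lam ->
  a = ((1 + 2 * mu * A) * lam + Num.sqrt ((1 + 2 * mu * A) ^+ 2 * lam ^+ 2
         + 4 * (1 + mu * A) * A * lam)) / 2 ->
  [/\ 0 < a, lam = a ^+ 2 / (a * (1 + 2 * mu * A) + (1 + mu * A) * A)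
    & mu * A * lam <= a].
Proof.
move=> mu0 A0 lam0 aE.
have muA0 : 0 <= mu * A by rewrite mulr_ge0 //; lra.
set b := 1 + 2 * mu * A in aE *.
have b1 : 1 <= b by rewrite /b -mulrA; lra.
set Q := b ^+ 2 * lam ^+ 2 + _ in aE.
have Q0 : 0 <= Q.
  by rewrite /Q addr_ge0 ?mulr_ge0 ?sqr_ge0 //; lra.
have sqrtQ := sqr_sqrtr Q0.
have sqrtQ0 := sqrtr_ge0 Q.
have blam0 : 0 < b * lam by rewrite mulr_gt0 //; lra.
have a0 : 0 < a by rewrite aE; lra.
have root : a ^+ 2 = lam * (a * b + (1 + mu * A) * A).
  have sqrtQE : Num.sqrt Q = 2 * a - b * lam by rewrite aE; lra.
  rewrite sqrtQE /Q in sqrtQ; nra.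
have den0 : 0 < a * b + (1 + mu * A) * A.
  have : 0 <= (1 + mu * A) * A by rewrite mulr_ge0 //; lra.
  have : 0 < a * b by rewrite mulr_gt0 //; lra.
  lra.
split => //; first by rewrite root mulfK // gt_eqF.
have : 0 <= a * (a - lam * b).
  have : 0 <= lam * ((1 + mu * A) * A) by rewrite !mulr_ge0 //; lra.
  nra.
rewrite pmulr_rge0 // => alamb.
have : mu * A * lam <= b * lam by rewrite ler_pM2r // /b -mulrA; lra.
lra.
Qed.

(* The exact one-iteration identity behind the convergence proof: the
   decrease of the weighted distance to an arbitrary point [w], plus the
   linearization terms, equals a multiple of the relative-error residual
   [(1 + lam mu) |y' - xt|^2 - |lam v + y' - xt|^2] plus a nonnegative
   multiple of [|x - y|^2]. *)
Lemma one_step_identity {x y y' v : 'rV[R]_n} (w : 'rV[R]_n) {xt x' : 'rV[R]_n}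
  {A a mu lam : R} :
  0 <= A -> 0 < a -> 0 < mu ->
  lam = a ^+ 2 / (a * (1 + 2 * mu * A) + (1 + mu * A) * A) ->
  xt = ((a - mu * A * lam) / (A + a)) *: x + ((A + mu * A * lam) / (A + a)) *: y ->
  x' = ((1 + mu * A) / (1 + mu * (A + a))) *: x
       + ((mu * a) / (1 + mu * (A + a))) *: y' - (a / (1 + mu * (A + a))) *: v ->
  (1 + mu * A) / 2 * ip (w - x) (w - x) - (1 + mu * (A + a)) / 2 * ip (w - x') (w - x')
  + ip v (a *: (w - y') + A *: (y - y'))
  + mu / 2 * (a * ip (w - y') (w - y') + A * ip (y - y') (y - y'))
  = (A + a) / (1 + lam * mu) / (2 * lam) *
      ((1 + lam * mu) * ip (y' - xt) (y' - xt)
       - ip (lam *: v + y' - xt) (lam *: v + y' - xt))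
    + (A + a) / (1 + lam * mu) * mu / 2 * ((a - mu * A * lam) / (A + a))
      * ((A + mu * A * lam) / (A + a)) * ip (x - y) (x - y).
Proof.
move=> A0 a0 mu0 lamE xtE x'E.
have muA0 : 0 <= mu * A by rewrite mulr_ge0 //; lra.
have den0 : 0 < a * (1 + 2 * mu * A) + (1 + mu * A) * A.
  have : 0 <= (1 + mu * A) * A by rewrite mulr_ge0 //; lra.
  have : 0 < a * (1 + 2 * mu * A) by rewrite mulr_gt0 // -mulrA; lra.
  lra.
have Aa0 : A + a != 0 by rewrite gt_eqF //; lra.
have muAa0 : 1 + mu * (A + a) != 0.
  by rewrite gt_eqF // ltr_wpDr ?mulr_ge0 //; lra.
have lam0 : 0 < lam by rewrite lamE divr_gt0 // exprn_gt0.
have lammu0 : 1 + lam * mu != 0 by rewrite gt_eqF // ltr_wpDr ?mulr_ge0 //; lra.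
rewrite x'E xtE; coordinatewise.
rewrite lamE in lammu0 *; field.
have a2mu0 : 0 <= a ^+ 2 * mu by rewrite mulr_ge0 ?sqr_ge0 //; lra.
rewrite Aa0 muAa0 (gt_eqF den0) (gt_eqF a0) /= andbT gt_eqF //; lra.
Qed.

(* Consequence of the identity and of the error criterion (in its weakest
   form [sigma = 1]): one iteration decreases the estimate-sequence potential
   up to [(A + a) eps]. *)
Lemma one_step_estimate {x y y' v : 'rV[R]_n} (w : 'rV[R]_n) {xt x' : 'rV[R]_n}
  {A a mu lam eps : R} :
  0 <= A -> 0 < mu -> 0 < lam ->
  a = ((1 + 2 * mu * A) * lam + Num.sqrt ((1 + 2 * mu * A) ^+ 2 * lam ^+ 2
         + 4 * (1 + mu * A) * A * lam)) / 2 ->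
  xt = ((a - mu * A * lam) / (A + a)) *: x + ((A + mu * A * lam) / (A + a)) *: y ->
  x' = ((1 + mu * A) / (1 + mu * (A + a))) *: x
       + ((mu * a) / (1 + mu * (A + a))) *: y' - (a / (1 + mu * (A + a))) *: v ->
  ip (lam *: v + y' - xt) (lam *: v + y' - xt) / (1 + lam * mu) + 2 * lam * eps
     <= ip (y' - xt) (y' - xt) ->
  (A + a) * eps <=
  (1 + mu * A) / 2 * ip (w - x) (w - x) - (1 + mu * (A + a)) / 2 * ip (w - x') (w - x')
  + (a * ip v (w - y') + A * ip v (y - y'))
  + mu / 2 * (a * ip (w - y') (w - y') + A * ip (y - y') (y - y')).
Proof.
move=> A0 mu0 lam0 aE xtE x'E crit.
have [a0 lamE muAlam] := step_coefficient_facts mu0 A0 lam0 aE.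
rewrite -ipDr (one_step_identity w A0 a0 mu0 lamE xtE x'E).
have lammu0 : 0 < 1 + lam * mu by rewrite ltr_wpDr ?mulr_ge0 //; lra.
set Np := ip (lam *: v + y' - xt) _ in crit *.
set Nr := ip (y' - xt) _ in crit *.
have residual : 2 * lam * (1 + lam * mu) * eps <= (1 + lam * mu) * Nr - Np.
  have NpE : Np / (1 + lam * mu) * (1 + lam * mu) = Np by rewrite divfK // gt_eqF.
  have := ler_wpM2r (ltW lammu0) crit.
  rewrite mulrDl NpE; lra.
have coef0 : 0 <= (A + a) / (1 + lam * mu) / (2 * lam).
  by rewrite !divr_ge0 //; lra.
have := ler_wpM2l coef0 residual.
have -> : (A + a) / (1 + lam * mu) / (2 * lam) * (2 * lam * (1 + lam * mu) * eps)
          = (A + a) * eps.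
  by field; rewrite !gt_eqF //; lra.
have Aa0 : 0 < A + a by lra.
have muAlam0 : 0 <= mu * A * lam by rewrite !mulr_ge0 //; lra.
have : 0 <= (A + a) / (1 + lam * mu) * mu / 2 * ((a - mu * A * lam) / (A + a))
            * ((A + mu * A * lam) / (A + a)) * ip (x - y) (x - y).
  rewrite mulr_ge0 ?ip_ge0 // mulr_ge0 ?(divr_ge0 _ (ltW Aa0)) //; last lra.
  rewrite mulr_ge0 ?(divr_ge0 _ (ltW Aa0)) //; last lra.
  by rewrite divr_ge0 // mulr_ge0 ?divr_ge0 //; lra.
lra.
Qed.

End OneIteration.

Section Algorithm1Analysis.
Context {R : realType} {n : nat} {f g : 'rV[R]_n -> \bar R} {mu sigma : R}
  {xstar : 'rV[R]_n} {x y xt v : nat -> 'rV[R]_n} {eps lam a A : nat -> R}.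
Hypotheses (mu_gt0 : 0 < mu) (f_cvx : convex_fun f) (g_sc : strongly_convex mu g)
  (f_proper : proper_fun f) (g_proper : proper_fun g)
  (h_dom : exists z, (f z + g z < +oo)%E)
  (xstar_min : forall z, (f xstar + g xstar <= f z + g z)%E)
  (alg : algorithm1 f g mu sigma x y xt v eps lam a A).

Let hy k := fine (f (y k)) + fine (g (y k)).
Let hstar := fine (f xstar) + fine (g xstar).
Let d0sq := ip (xstar - x 0%N) (xstar - x 0%N).

Lemma A_ge0_a_gt0 k : 0 <= A k /\ 0 < a k.+1.
Proof.
have [_ [A0 step]] := alg.
have Ak0 : 0 <= A k.
  elim: k => [|k IH]; first by rewrite A0.
  have [[lam0 aE] _ _ AE _] := step k.
  have [a0 _ _] := step_coefficient_facts mu_gt0 IH lam0 aE.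
  by rewrite AE; lra.
have [[lam0 aE] _ _ _ _] := step k.
by have [] := step_coefficient_facts mu_gt0 Ak0 lam0 aE.
Qed.

Lemma A_ge0 k : 0 <= A k.
Proof. exact: (A_ge0_a_gt0 k).1. Qed.

Lemma A_succ_gt0 k : 0 < A k.+1.
Proof.
have [_ [_ step]] := alg; have [_ _ _ -> _] := step k.
by have [] := A_ge0_a_gt0 k; lra.
Qed.

Lemma A_le_succ k : A k <= A k.+1.
Proof.
have [_ [_ step]] := alg; have [_ _ _ -> _] := step k.
by have [] := A_ge0_a_gt0 k; lra.
Qed.

Lemma xstar_fin : f xstar = (fine (f xstar))%:E /\ g xstar = (fine (g xstar))%:E.
Proof.
have [z hz] := h_dom.
exact: fin_of_sum_lt_pinfty (f_proper.1 xstar) (g_proper.1 xstar)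
         (le_lt_trans (xstar_min z) hz).
Qed.

Lemma y_fin k :
  f (y k.+1) = (fine (f (y k.+1)))%:E /\ g (y k.+1) = (fine (g (y k.+1)))%:E.
Proof.
have [_ [_ step]] := alg; have [_ _ [[uf [w [fyu [gyw _]]]] _ _] _ _] := step k.
by split; [exact: fin_of_subdiff f_proper.1 f_proper.2 fyu
          | exact: fin_of_subdiff g_proper.1 g_proper.2 gyw].
Qed.

Lemma gap_fin k :
  (f (y k.+1) + g (y k.+1) - (f xstar + g xstar))%E = (hy k.+1 - hstar)%:E.
Proof.
have [fyE gyE] := y_fin k; have [fsE gsE] := xstar_fin.
by rewrite /hy /hstar {1}fyE {1}gyE {1}fsE {1}gsE EFinB !EFinD.
Qed.

Lemma subgradient_ineq_at_min k :
  hy k.+1 + ip (v k.+1) (xstar - y k.+1)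
  + mu / 2 * ip (xstar - y k.+1) (xstar - y k.+1) - eps k.+1 <= hstar.
Proof.
have [_ [_ step]] := alg; have [_ _ [vsub _ _] _ _] := step k.
have [fyE gyE] := y_fin k; have [fsE gsE] := xstar_fin.
exact: sum_subdiff_ineq mu_gt0 g_sc vsub fyE gyE fsE gsE.
Qed.

(* ... and at the previous iterate [y k], weighted by [A k] (which vanishes
   for [k = 0], where [y 0] is arbitrary). *)
Lemma subgradient_ineq_at_previous k :
  A k * (hy k.+1 + ip (v k.+1) (y k - y k.+1)
         + mu / 2 * ip (y k - y k.+1) (y k - y k.+1) - eps k.+1) <= A k * hy k.
Proof.
case: k => [|k]; first by have [_ [-> _]] := alg; rewrite !mul0r.
rewrite ler_wpM2l ?A_ge0 //.
have [_ [_ step]] := alg; have [_ _ [vsub _ _] _ _] := step k.+1.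
have [fyE gyE] := y_fin k.+1; have [fyE' gyE'] := y_fin k.
exact: sum_subdiff_ineq mu_gt0 g_sc vsub fyE gyE fyE' gyE'.
Qed.

Lemma error_criterion k :
  ip (lam k.+1 *: v k.+1 + y k.+1 - xt k) (lam k.+1 *: v k.+1 + y k.+1 - xt k)
    / (1 + lam k.+1 * mu) + 2 * lam k.+1 * eps k.+1
  <= sigma ^+ 2 * ip (y k.+1 - xt k) (y k.+1 - xt k).
Proof.
have [_ [_ step]] := alg; have [_ _ [_ _ crit] _ _] := step k.
by rewrite -!enorm_sq.
Qed.

Lemma potential_bound k :
  A k * hy k + (1 + mu * A k) / 2 * ip (xstar - x k) (xstar - x k)
  <= A k * hstar + d0sq / 2.
Proof.
have [/andP[sigma0 sigma1] [A0 step]] := alg.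
elim: k => [|k IH]; first by rewrite A0 /d0sq; lra.
have [[lam0 aE] xtE _ AE xE] := step k; rewrite AE in xE.
have crit : ip (lam k.+1 *: v k.+1 + y k.+1 - xt k) (lam k.+1 *: v k.+1 + y k.+1 - xt k)
    / (1 + lam k.+1 * mu) + 2 * lam k.+1 * eps k.+1
    <= ip (y k.+1 - xt k) (y k.+1 - xt k).
  apply: le_trans (error_criterion k) _; rewrite ler_piMl ?ip_ge0 //.
  by rewrite expr_le1.
have est := one_step_estimate xstar (A_ge0 k) mu_gt0 lam0 aE xtE xE crit.
have [_ a0] := A_ge0_a_gt0 k.
have atmin := ler_wpM2l (ltW a0) (subgradient_ineq_at_min k).
have atprev := subgradient_ineq_at_previous k.
rewrite AE; lra.
Qed.

(* Part (a) in real form: the potential bound combined with the quadratic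
   growth [h(y) >= h(x^* ) + mu / 2 * |y - x^*|^2]. *)
Lemma rate_bounds k :
  [/\ hy k.+1 - hstar <= d0sq / (2 * A k.+1),
      ip (xstar - y k.+1) (xstar - y k.+1) <= d0sq / (mu * A k.+1)
    & ip (xstar - x k.+1) (xstar - x k.+1) <= d0sq / (1 + mu * A k.+1)].
Proof.
have pot := potential_bound k.+1.
have A0 := A_succ_gt0 k.
have [fyE gyE] := y_fin k; have [fsE gsE] := xstar_fin.
have growth := quadratic_growth_at_min mu_gt0 f_cvx g_sc f_proper.1 g_proper.1
                 xstar_min fyE gyE fsE gsE.
rewrite ip_subC in growth.
have Agrowth := ler_wpM2l (ltW A0) growth.
have muA0 : 0 < mu * A k.+1 by rewrite mulr_gt0.
have xdist0 := ip_ge0 (xstar - x k.+1); have ydist0 := ip_ge0 (xstar - y k.+1).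
have muAxdist0 := mulr_ge0 (ltW muA0) xdist0.
have muAydist0 := mulr_ge0 (ltW muA0) ydist0.
rewrite /hy /hstar in pot *.
by split; rewrite ler_pdivlMr; lra.
Qed.

Let B k := d0sq / (mu * A k.+1).

Lemma B_ge0 k : 0 <= B k.
Proof. by rewrite /B divr_ge0 ?ip_ge0 // mulr_ge0 ?A_ge0 // ltW. Qed.

(* [xt k.+1] is a convex combination of [x k.+1] and [y k.+1], both within
   [B k] (squared) of the minimizer. *)
Lemma xt_dist_bound k : ip (xstar - xt k.+1) (xstar - xt k.+1) <= B k.
Proof.
have [_ [_ step]] := alg; have [[lam0 aE] xtE _ _ _] := step k.+1.
have [_ ydist xdist] := rate_bounds k.
have [a0 _ muAlam] := step_coefficient_facts mu_gt0 (A_ge0 k.+1) lam0 aE.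
set al := (a k.+2 - mu * A k.+1 * lam k.+2) / (A k.+1 + a k.+2) in xtE.
set be := (A k.+1 + mu * A k.+1 * lam k.+2) / (A k.+1 + a k.+2) in xtE.
have A0 := A_ge0 k.+1.
have muAlam0 := mulr_ge0 (mulr_ge0 (ltW mu_gt0) A0) (ltW lam0).
have Aa0 : 0 < A k.+1 + a k.+2 by lra.
have al0 : 0 <= al by rewrite divr_ge0 //; lra.
have be0 : 0 <= be by rewrite /be divr_ge0 //; lra.
have albe : al + be = 1 by rewrite /al /be; field; rewrite gt_eqF.
have -> : xstar - xt k.+1 = al *: (xstar - x k.+1) + be *: (xstar - y k.+1).
  have beE : be = 1 - al by lra.
  by rewrite xtE beE; apply/rowP => i; rewrite !mxE; ring.
apply: le_trans (ip_convex _ _ al0 be0 albe) _.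
have xdistB : ip (xstar - x k.+1) (xstar - x k.+1) <= B k.
  apply: le_trans xdist _; apply: ler_wpdiv_denom; rewrite ?ip_ge0 //.
    by rewrite mulr_gt0 ?A_succ_gt0.
  lra.
have alxB := ler_wpM2l al0 xdistB; have beyB := ler_wpM2l be0 ydist.
have sumB : al * B k + be * B k = B k by rewrite -mulrDl albe mul1r.
rewrite /B in alxB beyB sumB *; lra.
Qed.

(* The new iterate [y k.+2] and the extrapolated point [xt k.+1] are both
   within [B k] (squared) of [x^*], hence within [4 B k] of each other. *)
Lemma residual_bound k : ip (y k.+2 - xt k.+1) (y k.+2 - xt k.+1) <= 4 * B k.
Proof.
have [_ ydist _] := rate_bounds k.+1.
have ydistB : ip (xstar - y k.+2) (xstar - y k.+2) <= B k.
  apply: le_trans ydist _; apply: ler_wpdiv_denom; rewrite ?ip_ge0 //.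
    by rewrite mulr_gt0 ?A_succ_gt0.
  by rewrite ler_pM2l ?A_le_succ.
have xtB := xt_dist_bound k.
have -> : y k.+2 - xt k.+1 = (y k.+2 - xstar) + (xstar - xt k.+1).
  by rewrite addrA subrK.
apply: le_trans (ip_add_le _ _) _; rewrite ip_subC; lra.
Qed.

(* Part (b), error bound: the criterion gives [2 lam eps <= sigma^2 * 4 B]. *)
Lemma eps_bound k : eps k.+2 <= 3 * sigma ^+ 2 / lam k.+2 * B k.
Proof.
have [_ [_ step]] := alg; have [[lam0 _] _ _ _ _] := step k.+1.
have crit := error_criterion k.+1.
have lammu0 : 0 < 1 + lam k.+2 * mu by rewrite ltr_wpDr ?mulr_ge0 ?(ltW lam0) ?(ltW mu_gt0).
have crit_lhs0 := divr_ge0 (ip_ge0 (lam k.+2 *: v k.+2 + y k.+2 - xt k.+1)) (ltW lammu0).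
have sigma_res := ler_wpM2l (sqr_ge0 sigma) (residual_bound k).
have sigmaB0 := mulr_ge0 (sqr_ge0 sigma) (B_ge0 k).
rewrite mulrAC ler_pdivlMr //; lra.
Qed.

(* Part (b), gradient bound: by the criterion [lam v + y - xt] is within
   [s = sigma sqrt(1 + mu lam)] times [|y - xt|], so [|lam v| <= (1 + s) |y - xt|]. *)
Lemma v_bound k : ip (v k.+2) (v k.+2) <=
  6 * (1 + sigma * Num.sqrt (1 + mu * lam k.+2)) ^+ 2 / lam k.+2 ^+ 2 * B k.
Proof.
have [/andP[sigma0 _] [_ step]] := alg; have [[lam0 _] _ _ _ _] := step k.+1.
have crit := error_criterion k.+1.
have [_ _ [_ eps0 _] _ _] := step k.+1.
have lammu0 : 0 < 1 + lam k.+2 * mu by rewrite ltr_wpDr ?mulr_ge0 ?(ltW lam0) ?(ltW mu_gt0).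
set s := sigma * Num.sqrt (1 + mu * lam k.+2).
have s0 : 0 <= s by rewrite mulr_ge0 ?sqrtr_ge0.
have close : ip (lam k.+2 *: v k.+2 + y k.+2 - xt k.+1) (lam k.+2 *: v k.+2 + y k.+2 - xt k.+1)
    <= s ^+ 2 * ip (y k.+2 - xt k.+1) (y k.+2 - xt k.+1).
  rewrite /s exprMn sqr_sqrtr ?(mulrC mu); last lra.
  rewrite -mulrA (mulrC _ (ip _ _)) mulrA -ler_pdivrMr //.
  have := mulr_ge0 (ltW lam0) eps0; lra.
have lamvE : lam k.+2 *: v k.+2 + y k.+2 - xt k.+1 - (y k.+2 - xt k.+1)
              = lam k.+2 *: v k.+2 by rewrite opprB addrA subrK addrK.
have := ip_sub_le s0 close; rewrite lamvE ipZZ => lamv.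
have res := ler_wpM2l (sqr_ge0 (1 + s)) (residual_bound k).
have sB0 := mulr_ge0 (sqr_ge0 (1 + s)) (B_ge0 k).
rewrite mulrAC ler_pdivlMr ?exprn_gt0 //; lra.
Qed.

Lemma convergence_rates k : (1 <= k)%N ->
  [/\ (f (y k) + g (y k) - (f xstar + g xstar)
         <= (enorm (xstar - x 0%N) ^+ 2 / (2 * A k))%:E)%E,
      enorm (xstar - y k) ^+ 2 <= enorm (xstar - x 0%N) ^+ 2 / (mu * A k)
    & enorm (xstar - x k) ^+ 2 <= enorm (xstar - x 0%N) ^+ 2 / (1 + mu * A k)].
Proof.
case: k => [//|k] _; have [gap ydist xdist] := rate_bounds k.
by rewrite gap_fin lee_fin !enorm_sq.
Qed.

Lemma residual_rates k : (1 <= k)%N ->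
  [/\ in_sum_subdiff f g (eps k.+1) (y k.+1) (v k.+1),
      enorm (v k.+1) ^+ 2 <=
        6 * (1 + sigma * Num.sqrt (1 + mu * lam k.+1)) ^+ 2 / lam k.+1 ^+ 2
          * (enorm (xstar - x 0%N) ^+ 2 / (mu * A k))
    & eps k.+1 <= 3 * sigma ^+ 2 / lam k.+1 * (enorm (xstar - x 0%N) ^+ 2 / (mu * A k))].
Proof.
case: k => [//|k] _; have [_ [_ step]] := alg; have [_ _ [vsub _ _] _ _] := step k.+1.
by rewrite !enorm_sq; split; [exact: vsub | exact: v_bound | exact: eps_bound].
Qed.

End Algorithm1Analysis.

Theorem theorem2p6 (R : realType) (n : nat) (f g : 'rV[R]_n -> \bar R) (mu : R)
  (xstar : 'rV[R]_n) (sigma : R)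
  (x y xt v : nat -> 'rV[R]_n) (eps lam a A : nat -> R) :
  proper_fun f -> closed_fun f -> convex_fun f ->
  proper_fun g -> closed_fun g -> 0 < mu -> strongly_convex mu g ->
  (exists z, (f z + g z < +oo)%E) ->
  (forall z, (f xstar + g xstar <= f z + g z)%E) ->
  algorithm1 f g mu sigma x y xt v eps lam a A ->
  let h := fun z => (f z + g z)%E in
  let d0 := enorm (xstar - x 0%N) in
  (forall k : nat, (1 <= k)%N ->
     [/\ (h (y k) - h xstar <= (d0 ^+ 2 / (2 * A k))%:E)%E,
         enorm (xstar - y k) ^+ 2 <= d0 ^+ 2 / (mu * A k) &
         enorm (xstar - x k) ^+ 2 <= d0 ^+ 2 / (1 + mu * A k)]) /\
  (forall k : nat, (1 <= k)%N ->
     [/\ in_sum_subdiff f g (eps k.+1) (y k.+1) (v k.+1),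
         enorm (v k.+1) ^+ 2 <=
           6 * (1 + sigma * Num.sqrt (1 + mu * lam k.+1)) ^+ 2 / lam k.+1 ^+ 2
             * (d0 ^+ 2 / (mu * A k)) &
         eps k.+1 <= 3 * sigma ^+ 2 / lam k.+1 * (d0 ^+ 2 / (mu * A k))]).
Proof.
move=> f_proper _ f_cvx g_proper _ mu_gt0 g_sc h_dom xstar_min alg h d0.
split.
- exact: (convergence_rates mu_gt0 f_cvx g_sc f_proper g_proper h_dom xstar_min alg).
- exact: (residual_rates mu_gt0 f_cvx g_sc f_proper g_proper h_dom xstar_min alg).
Qed.
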